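(* Let $i\in\{1,\dots,M\}$, $j\in\{1,\dots,N\}$, and let $e_0=(1,0,0,\dots)^\top$. For every $z\in\mathbb{C}\setminus\mathbb{N}_0$ the following hold: $$(a_i-1)\big({}_iT^{-1}S\big)S^{-1}\,Q(z)=(z+a_i-1)\,{}_iT^{-1}Q(z)-({}_iT^{-1}H_0)\,e_0,$$ $$b_j\big(T_j^{-1}S\big)S^{-1}\,Q(z)=(z+b_j)\,T_j^{-1}Q(z)-(T_j^{-1}H_0)\,e_0,$$ $$\big(T^{-1}S\big)BS^{-1}\big(\Upsilon Q(z-1)-P(z-1)\big)=z\,T^{-1}Q(z)-T^{-1}P(z)-(T^{-1}H_0)\,e_0,$$ where $\Upsilon:=\eta\,\prod_{i=1}^M(a_i-1)\big/\prod_{j=1}^N(b_j-1)$.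
   Context: Fix integers $M,N\ge0$ and parameters $\eta,a_1,\dots,a_M,b_1,\dots,b_N$. Let $w(z)=\frac{(a_1)_z\cdots(a_M)_z}{\Gamma(z+1)(b_1)_z\cdots(b_N)_z}\eta^z$, $(\alpha)_z=\Gamma(\alpha+z)/\Gamma(\alpha)$, on nodes $k\in\mathbb{N}_0$ (so $w(0)=1$), with finite moments $\rho_n=\sum_kk^nw(k)$ and moment matrix $G=(\rho_{n+m})$ admitting the Cholesky factorization $G=S^{-1}HS^{-\top}$ ($S$ lower unitriangular, $H=\operatorname{diag}(H_0,H_1,\dots)$). $P(z)=S\chi(z)$, $\chi(z)=(1,z,z^2,\dots)^\top$, is the vector of monic orthogonal polynomials $P_n$, and $Q(z)=(Q_0(z),Q_1(z),\dots)^\top$ with second kind functions $Q_n(z)=\sum_{k=0}^\infty\frac{P_n(k)w(k)}{z-k}$. $B$ is the lower Pascal matrix $B_{n,m}=\binom nm$. Inverse parameter shifts: ${}_iT^{-1}f$ is $f$ with $a_i$ replaced by $a_i-1$; $T_j^{-1}f$ is $f$ with $b_j$ replaced by $b_j+1$; $T^{-1}f$ is $f$ with every $a_i$ replaced by $a_i-1$ and every $b_j$ by $b_j-1$ (applied to $S,H_0,P,Q$, the weight, etc.). It is assumed that the parameters are such that all these shifted weights are well defined with finite moments and the Cholesky factorizations of all the shifted moment matrices exist. *)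

From HB Require Import structures.
From mathcomp Require Import all_boot all_order all_algebra.
From mathcomp Require Import all_classical all_reals all_analysis.
From mathcomp Require Import complex.
Set Implicit Arguments. Unset Strict Implicit. Unset Printing Implicit Defensive.
Import Order.TTheory GRing.Theory Num.Theory.
Import numFieldNormedType.Exports.
Local Open Scope ring_scope.
Local Open Scope complex_scope.
Local Open Scope classical_set_scope.

(* standard (modulus) normed-module / topological structure on the complex
   numbers R[i], viewed as a normed space over themselves *)
HB.instance Definition _ (R : rcfType) := NormedModule.copy R[i] R[i]^o.

Section Defs.
Variable R : realType.
Local Notation C := R[i].

Definition rising (x : C) (k : nat) : C := \prod_(l < k) (x + l%:R).

Definition hweight (M N : nat) (eta : C) (a : 'I_M -> C) (b : 'I_N -> C)
  (k : nat) : C :=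
  (\prod_(l < M) rising (a l) k) / (k`!%:R * \prod_(l < N) rising (b l) k)
  * eta ^+ k.

Definition moment_series (w : nat -> C) (n : nat) : nat -> C :=
  series (fun k => k%:R ^+ n * w k).

Definition moment (w : nat -> C) (n : nat) : C :=
  limn (moment_series w n).

Definition smat := nat -> nat -> C.
Definition svec := nat -> C.

Definition lower_unitriangular (S : smat) : Prop :=
  (forall n m, (n < m)%N -> S n m = 0) /\ (forall n, S n n = 1).

(* inverse of a lower unitriangular semi-infinite matrix, computed on
   the (n+1)x(n+1) leading block *)
Definition ltinv (S : smat) : smat := fun n m =>
  if (m <= n)%N then
    (invmx (\matrix_(p < n.+1, q < n.+1) S p q)) (inord n) (inord m)
  else 0.

(* product of a lower triangular matrix with a vector (only finitely many
   nonzero terms in each row) *)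
Definition lmulv (A : smat) (v : svec) : svec := fun n =>
  \sum_(k < n.+1) A n k * v k.

Definition pascal : smat := fun n m => 'C(n, m)%:R.

Definition e0 : svec := fun n => (n == 0)%:R.

(* G = S^{-1} H S^{-T}, S lower unitriangular, H = diag(H_0, H_1, ...) with
   nonzero H_n, G = (rho_{n+m}) *)
Definition cholesky (w : nat -> C) (S : smat) (H : nat -> C) : Prop :=
  lower_unitriangular S /\ (forall n, H n != 0) /\
  forall n m, moment w (n + m) =
    \sum_(k < n.+1) ltinv S n k * H k * ltinv S m k.

(* the weight is well defined (no (b_j)_k vanishes), has finite moments, and
   its moment matrix has the Cholesky factorization given by S, H *)
Definition admissible (M N : nat) (eta : C) (a : 'I_M -> C) (b : 'I_N -> C)
  (S : smat) (H : nat -> C) : Prop :=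
  (forall (l : 'I_N) (k : nat), rising (b l) k != 0) /\
  (forall n, cvgn (moment_series (hweight eta a b) n)) /\
  cholesky (hweight eta a b) S H.

Definition Pvec (S : smat) (z : C) : svec := fun n =>
  \sum_(m < n.+1) S n m * z ^+ m.

Definition Qvec (S : smat) (w : nat -> C) (z : C) : svec := fun n =>
  limn (series (fun k => Pvec S k%:R n * w k / (z - k%:R))).

Definition shift_a_down (M : nat) (i : 'I_M) (a : 'I_M -> C) : 'I_M -> C :=
  fun l => if l == i then a l - 1 else a l.
Definition shift_b_up (N : nat) (j : 'I_N) (b : 'I_N -> C) : 'I_N -> C :=
  fun l => if l == j then b l + 1 else b l.
Definition all_down (M : nat) (a : 'I_M -> C) : 'I_M -> C := fun l => a l - 1.

End Defs.

From HB Require Import structures.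
From mathcomp Require Import all_boot all_order all_algebra.
From mathcomp Require Import all_classical all_reals all_analysis.
From mathcomp Require Import complex.
From mathcomp Require Import ring lra.
Import Order.TTheory GRing.Theory Num.Theory.
Import numFieldNormedType.Exports.
Local Open Scope ring_scope.
Local Open Scope complex_scope.
Local Open Scope classical_set_scope.

(* Since [S^-1 P(k) = chi(k)], the vector [S^-1 Q(z)] has entries
   [sum_k k^p w(k) / (z - k)], so applying another lower unitriangular matrix
   [S'] gives [sum_k P'_n(k) w(k) / (z - k)]; the Pascal matrix replaces
   [chi(k)] by [chi(k + 1)].  Each relation then rests on a pointwise identity
   between weights, [(a_i - 1) w = (k + a_i - 1) w_a], [b_j w = (k + b_j) w_b]
   and [Ups w(k) = (k + 1) w_T(k + 1)]: writing [(k + d) / (z - k)] as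
   [(z + d) / (z - k) - 1] splits the sum into the second kind function of the
   shifted weight and [sum_k P'_n(k) w'(k) = H'_0 delta_n0] (orthogonality).
   All these series converge absolutely because [(k + 1) (k + 2) k^m w(k)] is
   bounded when the moments are finite. *)

Section lower_triangular_products.
Context {R : realType}.
Local Notation C := R[i].
Implicit Types (A B S : smat R) (v : svec R).

Lemma sum_ord_widen (f : nat -> C) k p : (k <= p)%N ->
  (forall m, (k < m)%N -> f m = 0) -> \sum_(m < k.+1) f m = \sum_(m < p.+1) f m.
Proof.
move=> kp f0; rewrite -!(big_mkord xpredT f).
rewrite [RHS](big_cat_nat (leq0n k.+1) (_ : k.+1 <= p.+1)%N) //=.
rewrite [X in _ = _ + X]big_nat_cond [X in _ = _ + X]big1 ?addr0 //.
by move=> m /andP[/andP[/f0]].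
Qed.

Lemma lmulvA A B v n : (forall k m, (k < m)%N -> B k m = 0) ->
  lmulv A (lmulv B v) n = lmulv (fun p m => lmulv A (B^~ m) p) v n.
Proof.
move=> B_lt; rewrite /lmulv.
transitivity (\sum_(k < n.+1) \sum_(m < n.+1) A n k * (B k m * v m)).
  apply: eq_bigr => k _; rewrite mulr_sumr.
  apply: (sum_ord_widen (fun m => A n k * (B k m * v m))); first by rewrite -ltnS.
  by move=> m /B_lt ->; rewrite mul0r mulr0.
rewrite exchange_big; apply: eq_bigr => m _; rewrite mulr_suml.
by apply: eq_bigr => k _; rewrite mulrA.
Qed.

Lemma lmulv_delta v n : lmulv (fun p m => (p == m)%:R) v n = v n.
Proof.
rewrite /lmulv big_ord_recr /= eqxx mul1r big1 ?add0r // => m _.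
by rewrite eq_sym ltn_eqF ?mul0r.
Qed.

Lemma lmulvB A u v n :
  lmulv A (fun p => u p - v p) n = lmulv A u n - lmulv A v n.
Proof. by rewrite /lmulv -sumrB; apply: eq_bigr => k _; rewrite mulrBr. Qed.

Lemma lmulvZ A c v n : lmulv A (fun p => c * v p) n = c * lmulv A v n.
Proof. by rewrite /lmulv mulr_sumr; apply: eq_bigr => k _; rewrite mulrCA. Qed.

Lemma lmulvZr A c v n : lmulv A (fun p => v p * c) n = lmulv A v n * c.
Proof. by rewrite /lmulv mulr_suml; apply: eq_bigr => k _; rewrite mulrA. Qed.

Lemma lmulv_powers A x n : lmulv A (fun p => x ^+ p) n = Pvec A x n.
Proof. by []. Qed.

Lemma Pvec_pascal x k : Pvec (pascal R) x k = (x + 1) ^+ k.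
Proof. by rewrite exprD1n; apply: eq_bigr => m _; rewrite mulr_natl. Qed.

Lemma ltinv_gt S n m : (n < m)%N -> ltinv S n m = 0.
Proof. by rewrite /ltinv ltnNge => /negbTE ->. Qed.

Section ltinv.
Context {S : smat R}.
Hypothesis S_lt : lower_unitriangular S.

Lemma ltinv_mulV n m : lmulv (ltinv S) (S^~ m) n = (n == m)%:R.
Proof.
have [S_up S_diag] := S_lt.
have [mn|nm] := leqP m n; last first.
  rewrite (ltn_eqF nm) /lmulv big1 // => k _.
  by rewrite S_up ?mulr0 // (leq_ltn_trans _ nm) // -ltnS.
set A := \matrix_(p < n.+1, q < n.+1) S p q.
have A_unit : A \in unitmx.
  rewrite unitmxE det_trig; last by apply/is_trig_mxP => p q pq; rewrite mxE S_up.
  by rewrite (eq_bigr (fun=> 1)) ?prodr_const ?expr1n ?unitr1 // => p _; rewrite mxE.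
have := mulVmx A_unit => /matrixP/(_ (inord n) (inord m)).
rewrite !mxE -val_eqE /= !inordK ?ltnS // => <-.
apply: eq_bigr => k _.
by rewrite /ltinv -ltnS ltn_ord inord_val mxE inordK.
Qed.

Lemma ltinv_mulmxV n m : lmulv S (ltinv S ^~ m) n = (n == m)%:R.
Proof.
have [S_up S_diag] := S_lt.
set A := \matrix_(p < n.+1, q < n.+1) S p q.
set B := \matrix_(p < n.+1, q < n.+1) ltinv S p q.
(* The leading block of [ltinv S] is a left, hence also a right, inverse. *)
have BA : B *m A = 1%:M.
  apply/matrixP => p q; rewrite !mxE -(ltinv_mulV p q).
  rewrite /lmulv (sum_ord_widen (fun k => ltinv S p k * S k q) p n).
  - by apply: eq_bigr => k _; rewrite !mxE.
  - by rewrite -ltnS.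
  - by move=> k /ltinv_gt ->; rewrite mul0r.
have [mn|nm] := leqP m n; last first.
  rewrite (ltn_eqF nm) /lmulv big1 // => k _.
  by rewrite ltinv_gt ?mulr0 // (leq_ltn_trans _ nm) // -ltnS.
have := mulmx1C BA => /matrixP/(_ (inord n) (inord m)).
rewrite !mxE -val_eqE /= !inordK ?ltnS // => <-.
by apply: eq_bigr => k _; rewrite !mxE !inordK.
Qed.

Lemma ltinvK v n : lmulv (ltinv S) (lmulv S v) n = v n.
Proof.
rewrite lmulvA; last by case: S_lt.
by rewrite -[RHS]lmulv_delta; apply: eq_bigr => k _; rewrite ltinv_mulV.
Qed.

Lemma Pvec_ltinvK x p : lmulv (ltinv S) (Pvec S x) p = x ^+ p.
Proof. exact: ltinvK. Qed.

End ltinv.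
End lower_triangular_products.

Section complex_series.
Context {R : realType}.
Local Notation C := R[i].

Lemma normcR (x : R) : `|x%:C| = `|x|%:C.
Proof. by rewrite normc_def /= expr0n addr0 sqrtr_sqr. Qed.

Lemma Re_Im_le_normc (x : C) :
  `|complex.Re x| <= complex.Re `|x| /\ `|complex.Im x| <= complex.Re `|x|.
Proof.
case: x => a b; rewrite normc_def /=.
have ab_ge0 : 0 <= a ^+ 2 + b ^+ 2 by rewrite addr_ge0 ?sqr_ge0.
by split; rewrite -sqrtr_sqr ler_sqrt // ?lerDl ?lerDr sqr_ge0.
Qed.

Lemma cvg_real_complex (r : R^nat) (l : R) :
  r @ \oo --> l -> (fun n => (r n)%:C) @ \oo --> l%:C.
Proof.
move=> /cvgrPdist_lt r_l; apply/(@cvgrPdist_lt C C) => e.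
rewrite ltcE /= => /andP[/eqP Im_e Re_e].
apply: filterS (r_l _ Re_e) => n /=.
by rewrite -rmorphB normcR ltcE /= Im_e eqxx.
Qed.

Lemma cvgn_complex (u : C^nat) :
  cvgn (fun n => complex.Re (u n)) -> cvgn (fun n => complex.Im (u n)) -> cvgn u.
Proof.
move=> /cvg_real_complex u_Re /cvg_real_complex u_Im.
have -> : u = fun n => (complex.Re (u n))%:C + 'i * (complex.Im (u n))%:C.
  by apply/funext => n; exact: complexE.
apply: cvgP; exact: (cvgD (K:=C) (V:=C) u_Re (cvgMl_tmp (K:=C) (a:='i) u_Im)).
Qed.

Lemma cvgn_bounded (u : C^nat) :
  cvgn u -> exists B : R, forall k, `|u k| <= B%:C.
Proof.
move=> /(cvg_seq_bounded (K:=C)) [M [M_real u_M]].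
have Im_M : complex.Im M = 0 by apply: complexI; rewrite RIm_real.
exists (complex.Re M + 1) => k; apply: (u_M _ _ k) => //.
by rewrite ltcE /= Im_M eqxx ltrDl ltr01.
Qed.

Lemma series_le_cvg_complex (u : C^nat) (r : R^nat) :
  (forall k, `|u k| <= (r k)%:C) -> cvgn (series r) -> cvgn (series u).
Proof.
move=> u_r r_cvg.
have Re_le_r k : complex.Re `|u k| <= r k.
  by rewrite -lecR (RRe_real (normr_real _)).
have real_cvg (v : R^nat) : (forall k, `|v k| <= complex.Re `|u k|) -> cvgn (series v).
  move=> v_u; apply: normed_cvg; apply: (series_le_cvg _ _ _ r_cvg) => k.
  - exact: normr_ge0.
  - by rewrite -ler0c (le_trans _ (u_r k)).
  - exact: le_trans (v_u k) (Re_le_r k).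
have Re_series n : complex.Re (series u n) = series (fun k => complex.Re (u k)) n.
  by rewrite /series /= raddf_sum.
have Im_series n : complex.Im (series u n) = series (fun k => complex.Im (u k)) n.
  by rewrite /series /= raddf_sum.
apply: cvgn_complex.
- under eq_fun do rewrite Re_series.
  by apply: real_cvg => k; case: (Re_Im_le_normc (u k)).
- under eq_fun do rewrite Im_series.
  by apply: real_cvg => k; case: (Re_Im_le_normc (u k)).
Qed.

Lemma cvg_series_inv_mul_succ :
  cvgn (series (fun k => ((k.+1 * k.+2)%:R : R)^-1)).
Proof.
have -> : (fun k => ((k.+1 * k.+2)%:R : R)^-1) = telescope (fun n => - harmonic n).
  apply/funext => k; rewrite /telescope /= natrM.
  have k_ge0 : (0 : R) <= k%:R by [].
  by field; apply/andP; split; apply: lt0r_neq0; lra.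
rewrite telescopeK.
exact: is_cvgB (is_cvgN (cvgP _ cvg_harmonic)) (is_cvg_cst _).
Qed.

Lemma cvg_inv_sub_nat (z : C) : (fun k => (z - k%:R)^-1) @ \oo --> 0.
Proof.
have inv_succ : (fun k => (k.+1%:R : C)^-1) @ \oo --> 0.
  have -> : (fun k => (k.+1%:R : C)^-1) = fun k => (harmonic k)%:C.
    by apply/funext => k; rewrite /= fmorphV rmorph_nat.
  exact: cvg_real_complex cvg_harmonic.
(* This also holds when [z = k], both sides being [0]. *)
have -> : (fun k => (z - k%:R)^-1) =
          fun k => (k.+1%:R)^-1 * ((z + 1) * (k.+1%:R)^-1 - 1)^-1.
  apply/funext => k; rewrite -invfM; congr GRing.inv.
  by rewrite mulrBr mulr1 mulrCA mulfV ?pnatr_eq0 // mulr1 -natr1; ring.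
have lim_neq0 : (z + 1) * 0 - 1 != 0 :> C by rewrite mulr0 sub0r oppr_eq0 oner_eq0.
rewrite -(mul0r ((z + 1) * 0 - 1)^-1).
apply: (cvgM (K:=C)); first exact: inv_succ.
apply: (cvgV (K:=C) lim_neq0).
apply: (@cvgB C C nat \oo _ (fun k => (z + 1) / k.+1%:R) (fun=> 1)).
- exact: (cvgMl_tmp (K:=C) (a:=z+1) inv_succ).
- exact: cvg_cst.
Qed.

End complex_series.

Section series_limits.
Context {R : realType}.
Local Notation C := R[i].

Lemma cvg_seriesZ (c : C) {f : C^nat} {l : C} :
  series f @ \oo --> l -> series (fun t => c * f t) @ \oo --> c * l.
Proof.
move=> f_l; rewrite (_ : series _ = fun N => c * series f N).
  exact: (cvgMl_tmp (K:=C) (a:=c) f_l).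
by apply/funext => N; rewrite /series /= mulr_sumr.
Qed.

Lemma cvg_seriesB {f g : C^nat} {a b : C} :
  series f @ \oo --> a -> series g @ \oo --> b ->
  series (fun t => f t - g t) @ \oo --> a - b.
Proof.
move=> f_a g_b; rewrite (_ : series _ = series f - series g).
  exact: (cvgB (K:=C) (V:=C) f_a g_b).
by apply/funext => N; rewrite /series /= sumrB.
Qed.

Lemma cvg_series_shift {f : C^nat} {l : C} : f 0%N = 0 ->
  series f @ \oo --> l -> series (fun t => f t.+1) @ \oo --> l.
Proof.
move=> f0 f_l; rewrite (_ : series _ = fun N => series f N.+1).
  by rewrite (cvg_shiftS (series f)).
by apply/funext => N; rewrite /series /= big_nat_recl // f0 add0r.
Qed.

Lemma cvg_sum (I : Type) (r : seq I) (u : I -> C^nat) (l : I -> C) :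
  (forall i, u i @ \oo --> l i) ->
  (fun n => \sum_(i <- r) u i n) @ \oo --> \sum_(i <- r) l i.
Proof.
move=> u_l; elim: r => [|i r IH].
  rewrite big_nil (_ : (fun n => _) = fun=> 0); first exact: cvg_cst.
  by apply/funext => n; rewrite big_nil.
rewrite big_cons (_ : (fun n => _) = u i + fun n => \sum_(j <- r) u j n).
  exact: (cvgD (K:=C) (V:=C) (u_l i) IH).
by apply/funext => n; rewrite big_cons.
Qed.

Lemma cvg_series_lmulv (A : smat R) (f : nat -> C^nat) (l : svec R) n :
  (forall p, series (f p) @ \oo --> l p) ->
  series (fun t => lmulv A (f^~ t) n) @ \oo --> lmulv A l n.
Proof.
move=> f_l; rewrite (_ : series _ = fun N => \sum_(k < n.+1) A n k * series (f k) N).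
  by apply: cvg_sum => k; exact: (cvgMl_tmp (K:=C) (a:=A n k) (f_l k)).
apply/funext => N; rewrite /series /lmulv /= exchange_big /=.
by apply: eq_bigr => k _; rewrite mulr_sumr.
Qed.

Lemma cvg_series_Pvec (A : smat R) (x g : C^nat) (l : svec R) n :
  (forall p, series (fun t => x t ^+ p * g t) @ \oo --> l p) ->
  series (fun t => Pvec A (x t) n * g t) @ \oo --> lmulv A l n.
Proof.
move=> x_l; rewrite (_ : (fun t => _) = fun t => lmulv A (fun p => x t ^+ p * g t) n).
  exact: cvg_series_lmulv.
by apply/funext => t; rewrite lmulvZr.
Qed.

End series_limits.

Section weights.
Context {R : realType}.
Local Notation C := R[i].

Lemma rising_recr (x : C) k : rising x k.+1 = rising x k * (x + k%:R).
Proof. by rewrite /rising big_ord_recr. Qed.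

Lemma rising_recl (x : C) k : rising x k.+1 = x * rising (x + 1) k.
Proof.
rewrite /rising big_ord_recl addr0; congr (_ * _).
by apply: eq_bigr => l _; rewrite /bump /= natrD addrA.
Qed.

Lemma rising_contiguous (x : C) k :
  (x + k%:R) * rising x k = x * rising (x + 1) k.
Proof. by rewrite mulrC -rising_recr rising_recl. Qed.

Context {M N : nat} (eta : C) (a : 'I_M -> C) (b : 'I_N -> C).

Lemma hweight_shift_a_down i k :
  (k%:R + (a i - 1)) * hweight eta (shift_a_down i a) b k =
  (a i - 1) * hweight eta a b k.
Proof.
rewrite /hweight (bigD1 i) //= [\prod_(l < M) rising (a l) k](bigD1 i) //=.
rewrite {1}/shift_a_down eqxx (eq_bigr (fun l => rising (a l) k)); last first.
  by move=> l /negbTE l_i; rewrite /shift_a_down l_i.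
have := rising_contiguous (a i - 1) k; rewrite subrK addrC => contiguous.
by rewrite !mulrA contiguous.
Qed.

Hypothesis b_rising : forall l k, rising (b l) k != 0.

Lemma hweight_shift_b_up j k :
  (k%:R + b j) * hweight eta a (shift_b_up j b) k = b j * hweight eta a b k.
Proof.
rewrite /hweight (bigD1 j) //= [\prod_(l < N) rising (b l) k](bigD1 j) //=.
rewrite {1}/shift_b_up eqxx (eq_bigr (fun l => rising (b l) k)); last first.
  by move=> l /negbTE l_j; rewrite /shift_b_up l_j.
have bj_neq0 : b j != 0 by have := b_rising j 1; rewrite /rising big_ord1 addr0.
have rest_neq0 : \prod_(l < N | l != j) rising (b l) k != 0 by apply/prodf_neq0.
have fact_neq0 : (k`!%:R : C) != 0 by rewrite pnatr_eq0 -lt0n fact_gt0.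
have shifted : rising (b j + 1) k = (k%:R + b j) * rising (b j) k / b j.
  by rewrite [k%:R + _]addrC rising_contiguous mulrAC mulfV // mul1r.
have kb_neq0 : k%:R + b j != 0.
  by have := b_rising j k.+1; rewrite rising_recr mulf_eq0 negb_or addrC => /andP[].
rewrite shifted; field.
by rewrite fact_neq0 rest_neq0 bj_neq0 kb_neq0 b_rising.
Qed.

Hypothesis b_neq1 : forall l, b l - 1 != 0.

Lemma hweight_all_down k :
  eta * (\prod_(l < M) (a l - 1)) / (\prod_(l < N) (b l - 1)) * hweight eta a b k =
  k.+1%:R * hweight eta (all_down a) (all_down b) k.+1.
Proof.
have rising_down (x : C) : rising (x - 1) k.+1 = (x - 1) * rising x k.
  by rewrite rising_recl subrK.
rewrite /hweight /all_down.
rewrite [\prod_(l < M) rising _ k.+1](eq_bigr (fun l => (a l - 1) * rising (a l) k));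
  last by move=> l _; rewrite rising_down.
rewrite [\prod_(l < N) rising _ k.+1](eq_bigr (fun l => (b l - 1) * rising (b l) k));
  last by move=> l _; rewrite rising_down.
rewrite !big_split /= factS natrM exprS.
have fact_neq0 : (k`!%:R : C) != 0 by rewrite pnatr_eq0 -lt0n fact_gt0.
have rising_neq0 : \prod_(l < N) rising (b l) k != 0 by apply/prodf_neq0.
have shift_neq0 : \prod_(l < N) (b l - 1) != 0 by apply/prodf_neq0.
have succ_neq0 : (k.+1%:R : C) != 0 by rewrite pnatr_eq0.
field.
by rewrite fact_neq0 rising_neq0 shift_neq0 addrC natr1 succ_neq0.
Qed.

End weights.

Section cauchy_transform.
Context {R : realType}.
Local Notation C := R[i].

Lemma cvg_series_cauchy_moment (w : nat -> C) (z : C) m :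
  (forall n, cvgn (moment_series w n)) ->
  cvgn (series (fun k => k%:R ^+ m * (w k / (z - k%:R)))).
Proof.
move=> w_mom.
have bounded_term n : exists B : R, forall k, `|k%:R ^+ n * w k| <= B%:C.
  exact/cvgn_bounded/(cvgP 0)/(cvg_series_cvg_0 (K:=C) (V:=C) (w_mom n)).
have [B0 B0_bound] := bounded_term m.
have [B1 B1_bound] := bounded_term m.+1.
have [B2 B2_bound] := bounded_term m.+2.
have [D D_bound] := cvgn_bounded _ (cvgP 0 (cvg_inv_sub_nat z)).
(* [(k+1)(k+2) k^m w(k)] is a combination of three bounded terms. *)
set K := (B2 + 3 * B1 + 2 * B0) * D.
apply: (series_le_cvg_complex _ (fun k => K * ((k.+1 * k.+2)%:R)^-1)); last first.
  exact: (is_cvg_seriesZ (k:=K) cvg_series_inv_mul_succ).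
move=> k; have n_gt0 : (0 : C) < (k.+1 * k.+2)%:R by rewrite ltr0n muln_gt0.
rewrite rmorphM /= fmorphV rmorph_nat ler_pdivlMr // -[X in _ * X]normr_nat -normrM.
have -> : k%:R ^+ m * (w k / (z - k%:R)) * (k.+1 * k.+2)%:R =
    (k%:R ^+ m.+2 * w k + 3 * (k%:R ^+ m.+1 * w k) + 2 * (k%:R ^+ m * w k))
    * (z - k%:R)^-1.
  by rewrite natrM -!natr1 !exprS; ring.
rewrite normrM /K rmorphM; apply: ler_pM => //.
rewrite !rmorphD !rmorphM /= !rmorph_nat.
apply: le_trans (ler_normD _ _) _; apply: lerD; last first.
  by rewrite normrM normr_nat ler_wpM2l.
apply: le_trans (ler_normD _ _) _; apply: lerD => //.
by rewrite normrM normr_nat ler_wpM2l.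
Qed.

Lemma moment_cholesky {w : nat -> C} {S : smat R} {H : nat -> C} :
  cholesky w S H -> forall m, moment w m = ltinv S m 0%N * H 0%N.
Proof.
move=> [S_lt [_ moment_eq]] m.
have := moment_eq m 0%N; rewrite addn0 => ->.
have ltinv00 : ltinv S 0%N 0%N = 1.
  by have := ltinv_mulV S_lt 0 0; rewrite /lmulv big_ord1 /= (proj2 S_lt) mulr1.
rewrite big_ord_recl big1 ?addr0 => [|k _].
  by rewrite ltinv00 mulr1.
by rewrite [ltinv S 0%N _]ltinv_gt ?mulr0.
Qed.

Lemma cvg_series_orthogonality {w : nat -> C} {S : smat R} {H : nat -> C} n :
  (forall m, cvgn (moment_series w m)) -> cholesky w S H ->
  series (fun k => Pvec S k%:R n * w k) @ \oo --> H 0%N * e0 R n.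
Proof.
move=> w_mom chol; have S_lt := chol.1.
have -> : H 0%N * e0 R n = lmulv S (moment w) n.
  transitivity (lmulv S (fun m => ltinv S m 0%N * H 0%N) n).
    by rewrite lmulvZr ltinv_mulmxV // mulrC.
  by apply: eq_bigr => m _; rewrite (moment_cholesky chol).
exact: (cvg_series_Pvec S (fun k => k%:R) w (moment w) n w_mom).
Qed.

Lemma cvg_Qvec (S : smat R) (w : nat -> C) z n :
  (forall m, cvgn (moment_series w m)) ->
  series (fun k => Pvec S k%:R n * (w k / (z - k%:R))) @ \oo --> Qvec S w z n.
Proof.
move=> w_mom; rewrite /Qvec.
rewrite (_ : (fun k => _ / _) = fun k => Pvec S k%:R n * (w k / (z - k%:R))).
  apply: cvgP.
  apply: (cvg_series_Pvec S (fun k => k%:R) (fun k => w k / (z - k%:R))) => m.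
  exact: cvg_series_cauchy_moment.
by apply/funext => k; rewrite mulrA.
Qed.

Lemma cvg_series_ltinv_Qvec (S : smat R) (w : nat -> C) z p :
  lower_unitriangular S -> (forall m, cvgn (moment_series w m)) ->
  series (fun t => t%:R ^+ p * (w t / (z - t%:R))) @ \oo -->
  lmulv (ltinv S) (Qvec S w z) p.
Proof.
move=> S_lt w_mom.
rewrite (_ : (fun t => _) =
  fun t => lmulv (ltinv S) (fun q => Pvec S t%:R q * (w t / (z - t%:R))) p).
  by apply: cvg_series_lmulv => q; exact: cvg_Qvec.
by apply/funext => t; rewrite lmulvZr Pvec_ltinvK.
Qed.

End cauchy_transform.


Section contiguous_relations.
Context {R : realType}.
Local Notation C := R[i].
Context {S S' : smat R} {w w' H' : nat -> C} {z : C}.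
Hypothesis S_lt : lower_unitriangular S.
Hypothesis w_mom : forall m, cvgn (moment_series w m).
Hypothesis w'_mom : forall m, cvgn (moment_series w' m).
Hypothesis w'_chol : cholesky w' S' H'.
Hypothesis z_notin_nat : forall k, z != k%:R.

Lemma Qvec_linear_weight (c d : C) :
  (forall k, c * w k = (k%:R + d) * w' k) ->
  forall n, c * lmulv S' (lmulv (ltinv S) (Qvec S w z)) n =
            (z + d) * Qvec S' w' z n - H' 0%N * e0 R n.
Proof.
move=> weightE n.
have lhs : series (fun t => c * (Pvec S' t%:R n * (w t / (z - t%:R)))) @ \oo -->
           c * lmulv S' (lmulv (ltinv S) (Qvec S w z)) n.
  apply: (cvg_seriesZ c); apply: (cvg_series_Pvec S' (fun t => t%:R)) => p.
  exact: (cvg_series_ltinv_Qvec S w z p S_lt w_mom).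
have summandE t : c * (Pvec S' t%:R n * (w t / (z - t%:R))) =
    (z + d) * (Pvec S' t%:R n * (w' t / (z - t%:R))) - Pvec S' t%:R n * w' t.
  have zt_neq0 : z - t%:R != 0 by rewrite subr_eq0.
  transitivity (Pvec S' t%:R n * (c * w t) / (z - t%:R)); first by ring.
  by rewrite weightE; field.
have rhs : series (fun t => c * (Pvec S' t%:R n * (w t / (z - t%:R)))) @ \oo -->
           (z + d) * Qvec S' w' z n - H' 0%N * e0 R n.
  rewrite (funext summandE); apply: cvg_seriesB.
  - by apply: (cvg_seriesZ (z + d)); exact: (cvg_Qvec S' w' z n w'_mom).
  - exact: (cvg_series_orthogonality n w'_mom w'_chol).
rewrite -(cvg_lim (T:=C) _ lhs) //; exact: (cvg_lim (T:=C) _ rhs).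
Qed.

Lemma cvg_series_shifted_weight (c : C) :
  (forall k, c * w k = k.+1%:R * w' k.+1) ->
  forall n, series (fun t => Pvec S' (t%:R + 1) n * (c * (w t / (z - 1 - t%:R))))
              @ \oo --> z * Qvec S' w' z n - H' 0%N * e0 R n.
Proof.
move=> weightE n.
pose h s := z * (Pvec S' s%:R n * (w' s / (z - s%:R))) - Pvec S' s%:R n * w' s.
have h_cvg : series h @ \oo --> z * Qvec S' w' z n - H' 0%N * e0 R n.
  rewrite /h; apply: cvg_seriesB.
  - by apply: (cvg_seriesZ z); exact: (cvg_Qvec S' w' z n w'_mom).
  - exact: (cvg_series_orthogonality n w'_mom w'_chol).
have h0 : h 0%N = 0.
  have z_neq0 : z != 0 := z_notin_nat 0.
  by rewrite /h subr0; field.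
rewrite (_ : (fun t => _) = fun t => h t.+1); first exact: cvg_series_shift h0 h_cvg.
apply/funext => t; rewrite /h natr1.
have zt_neq0 : z - t.+1%:R != 0 by rewrite subr_eq0.
transitivity (Pvec S' t.+1%:R n * (c * w t) / (z - 1 - t%:R)); first by ring.
rewrite weightE (_ : z - 1 - t%:R = z - t.+1%:R); last by rewrite -natr1; ring.
by move: zt_neq0; move: (t.+1%:R : C) => s s_neq0; field.
Qed.

Lemma Qvec_shifted_weight (c : C) :
  (forall k, c * w k = k.+1%:R * w' k.+1) ->
  forall n, lmulv S' (lmulv (pascal R) (lmulv (ltinv S)
              (fun m => c * Qvec S w (z - 1) m - Pvec S (z - 1) m))) n =
            z * Qvec S' w' z n - Pvec S' z n - H' 0%N * e0 R n.
Proof.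
move=> weightE n.
pose g t := c * (w t / (z - 1 - t%:R)).
pose L p := c * lmulv (ltinv S) (Qvec S w (z - 1)) p.
have moments_g p : series (fun t => t%:R ^+ p * g t) @ \oo --> L p.
  rewrite (_ : (fun t => _) = fun t => c * (t%:R ^+ p * (w t / (z - 1 - t%:R)))).
    apply: (cvg_seriesZ c).
    exact: (cvg_series_ltinv_Qvec S w (z - 1) p S_lt w_mom).
  by apply/funext => t; rewrite /g mulrCA.
have pascal_g k :
    series (fun t => (t%:R + 1) ^+ k * g t) @ \oo --> lmulv (pascal R) L k.
  rewrite (_ : (fun t => _) = fun t => Pvec (pascal R) t%:R k * g t).
    by apply: (cvg_series_Pvec _ (fun t => t%:R)) => p; exact: moments_g.
  by apply/funext => t; rewrite Pvec_pascal.
have lhs : series (fun t => Pvec S' (t%:R + 1) n * g t) @ \oo -->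
           lmulv S' (lmulv (pascal R) L) n.
  by apply: (cvg_series_Pvec S' (fun t => t%:R + 1) g) => k; exact: pascal_g.
have inner p :
    lmulv (ltinv S) (fun m => c * Qvec S w (z - 1) m - Pvec S (z - 1) m) p =
    L p - (z - 1) ^+ p.
  by rewrite lmulvB lmulvZ Pvec_ltinvK.
have middle k : lmulv (pascal R) (lmulv (ltinv S)
                  (fun m => c * Qvec S w (z - 1) m - Pvec S (z - 1) m)) k =
                lmulv (pascal R) L k - z ^+ k.
  by rewrite (funext inner) lmulvB lmulv_powers Pvec_pascal subrK.
rewrite (funext middle) lmulvB lmulv_powers [RHS]addrAC; congr (_ - _).
rewrite -(cvg_lim (T:=C) _ lhs) //.
rewrite /g; exact: (cvg_lim (T:=C) _ (cvg_series_shifted_weight c weightE n)).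
Qed.

End contiguous_relations.

Theorem mainTheorem5 (R : realType) (M N : nat) (eta : R[i])
  (a : 'I_M -> R[i]) (b : 'I_N -> R[i]) (i : 'I_M) (j : 'I_N)
  (S : smat R) (H : nat -> R[i])
  (Sa : smat R) (Ha : nat -> R[i])
  (Sb : smat R) (Hb : nat -> R[i])
  (ST : smat R) (HT : nat -> R[i]) :
  admissible eta a b S H ->
  admissible eta (shift_a_down i a) b Sa Ha ->
  admissible eta a (shift_b_up j b) Sb Hb ->
  admissible eta (all_down a) (all_down b) ST HT ->
  forall z : R[i], (forall k : nat, z != k%:R) ->
  let w := hweight eta a b in
  let Q := Qvec S w in
  let Qa := Qvec Sa (hweight eta (shift_a_down i a) b) in
  let Qb := Qvec Sb (hweight eta a (shift_b_up j b)) in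
  let QT := Qvec ST (hweight eta (all_down a) (all_down b)) in
  let Ups := eta * (\prod_(l < M) (a l - 1)) / (\prod_(l < N) (b l - 1)) in
  (forall n, (a i - 1) * lmulv Sa (lmulv (ltinv S) (Q z)) n
             = (z + a i - 1) * Qa z n - Ha 0%N * e0 R n) /\
  (forall n, b j * lmulv Sb (lmulv (ltinv S) (Q z)) n
             = (z + b j) * Qb z n - Hb 0%N * e0 R n) /\
  (forall n, lmulv ST (lmulv (pascal R) (lmulv (ltinv S)
                (fun m => Ups * Q (z - 1) m - Pvec S (z - 1) m))) n
             = z * QT z n - Pvec ST z n - HT 0%N * e0 R n).
Proof.
move=> [b_rising [w_mom [S_lt _]]] [_ [wa_mom chola]] [_ [wb_mom cholb]]
  [bT_rising [wT_mom cholT]] z z_nat w Q Qa Qb QT Ups.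
rewrite {}/Q {}/Qa {}/Qb {}/QT {}/Ups {}/w.
have b_neq1 l : b l - 1 != 0.
  by have := bT_rising l 1; rewrite /rising big_ord1 addr0.
split; [|split] => n.
- rewrite -addrA; apply: (Qvec_linear_weight S_lt w_mom wa_mom chola z_nat) => k.
  by rewrite hweight_shift_a_down.
- apply: (Qvec_linear_weight S_lt w_mom wb_mom cholb z_nat) => k.
  by rewrite hweight_shift_b_up.
- apply: (Qvec_shifted_weight S_lt w_mom wT_mom cholT z_nat) => k.
  exact: hweight_all_down.
Qed.
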